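(* With the setting below, the operator $\bar\pi:\Omega^1\to\mathfrak{X}_{\mathcal{A}}(\Lambda_0)$ defined by $\bar\pi(\alpha_{\mathbf{p}})(\gamma)=\Phi_\gamma^{-1}\pi_1(\alpha_{\mathbf{p}_\gamma})$, which explicitly is $$\bar\pi(\alpha_{\mathbf{p}})(\gamma)=D_s^{-1}(\mathbf{k}_\gamma\mathbf{p}_\gamma')\mathbf{T}_\gamma+\mathbf{p}_\gamma'\mathbf{N}_\gamma,$$ is a Hamiltonian operator: it is skew-symmetric, i.e. $\alpha_{\mathbf{q}}(\bar\pi\alpha_{\mathbf{p}})=-\alpha_{\mathbf{p}}(\bar\pi\alpha_{\mathbf{q}})$; its image $\bar\pi\Omega^1$ is a Lie subalgebra of $\mathfrak{X}_{\mathcal{A}}(\Lambda_0)$; and the $2$-form $\omega(\bar\pi\alpha,\bar\pi\beta)=\beta(\bar\pi\alpha)$ is closed, i.e. $d\omega=0$, where $d\omega(\xi_1,\xi_2,\xi_3)=\sum_{\mathrm{cyclic}}\big(\xi_1\,\omega(\xi_2,\xi_3)-\omega([\xi_1,\xi_2],\xi_3)\big)$ for $\xi_i\in\bar\pi\Omega^1$.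
   Context: $\Lambda_0$ is the space of arc-length parametrized plane curves; for $\gamma\in\Lambda_0$, $\{\mathbf{T}_\gamma,\mathbf{N}_\gamma\}$ is its Frenet frame and $\mathbf{k}_\gamma$ its curvature ($\mathbf{T}'=\mathbf{k}\mathbf{N}$, $\mathbf{N}'=-\mathbf{k}\mathbf{T}$; $'=D_s$ is the arc-length derivative, $D_s^{-1}$ a formal antiderivative). $\mathcal{P}=\mathbb{R}[k^{(m)}:m\in\mathbb{N}]$; $\mathcal{A}$ is the algebra of scalar fields $\mathbf{f}$ on $\Lambda_0$ with $\mathbf{f}_\gamma\in\mathcal{P}$ evaluated at $\mathbf{k}_\gamma$. $\mathfrak{X}_{\mathcal{A}}(\Lambda_0)=\{\mathbf{V}=\mathbf{f}\mathbf{T}+\mathbf{g}\mathbf{N}:\mathbf{f},\mathbf{g}\in\mathcal{A},\ \mathbf{f}_\gamma=D_s^{-1}(\mathbf{k}_\gamma\mathbf{g}_\gamma)\}$, a Lie algebra under $[\mathbf{V},\mathbf{W}](\gamma)=D_{\mathbf{V}_\gamma}\mathbf{W}_\gamma-D_{\mathbf{W}_\gamma}\mathbf{V}_\gamma$, where for $V=fT+gN$, $W=f_WT+g_WN$: $\varphi_V=g'+kf$, $\rho_V=f'-kg$, $V$ acts on $\mathcal{P}$ as the derivation with $V(k)=\varphi_V'-k\rho_V$, $V(h')=V(h)'+\rho_Vh'$, and $D_VW=(V(f_W)-g_W\varphi_V)T+(V(g_W)+f_W\varphi_V)N$. For $\mathbf{V}\in\mathfrak{X}_{\mathcal{A}}(\Lambda_0)$,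 $\mathbf{V}_\gamma(\mathbf{k}_\gamma)=\varphi_{\mathbf{V}_\gamma}'$. For $a\in\mathcal{P}$, $\partial_a=\sum_m a^{(m)}\partial/\partial k^{(m)}$; $\Phi_\gamma(\mathbf{V}_\gamma)=\partial_{\mathbf{V}_\gamma(\mathbf{k}_\gamma)}$, which is injective on $\mathfrak{X}_{\mathcal{A}}(\Lambda_0)$, and $\Phi_\gamma^{-1}$ denotes its inverse on the image. $\Omega^0=\{S=\int L\,ds: L=L(\mathbf{k},\mathbf{k}',\dots)\in\mathcal{A}\}$ (functionals modulo total derivatives), with $(\mathbf{V}S)(\gamma)=\int\mathbf{V}_\gamma(\mathbf{k}_\gamma)\frac{\delta L}{\delta\mathbf{k}_\gamma}ds$, $\frac{\delta L}{\delta k}=\sum_m(-D_s)^m\frac{\partial L}{\partial k^{(m)}}$. For $\mathbf{p}\in\mathcal{A}$, $\alpha_{\mathbf{p}}(\mathbf{V})=\int\mathbf{V}(\mathbf{k})\mathbf{p}\,ds\in\Omega^0$, and $\Omega^1=\{\alpha_{\mathbf{p}}:\mathbf{p}\in\mathcal{A},\ \exists\mathbf{p}_1\in\mathcal{A}\text{ with }\mathbf{p}_1'=\mathbf{k}\mathbf{p}'\}$. $\pi_1$ is the mKdV Hamiltonian operator $\pi_1(\alpha_p)=\partial_{\mathcal{D}(p)}$ with $\mathcal{D}=D_s^3+k'D_s^{-1}kD_s+k^2D_s$. *)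

From HB Require Import structures.
From mathcomp Require Import all_boot all_order all_algebra.
From mathcomp Require Import finmap.
From mathcomp.multinomials Require Import monalg.

Set Implicit Arguments.
Unset Strict Implicit.
Unset Printing Implicit Defensive.

Import Order.TTheory GRing.Theory Num.Theory.
Local Open Scope ring_scope.

(* The differential polynomial ring
   P = R[k^(m) : m in nat]  is the monoid algebra over the commutative
   monomials in the nat-indexed variables k^(0)=k, k^(1)=k', ...         *)

Section DiffAlg.
Variable R : realFieldType.

Definition P := {malg R[cmonom nat]}.

Definition kv (m : nat) : P := << ucm m >>.

(* The unique derivation of P sending each variable k^(i) to e i :
   h |-> sum_i (e i) * dh/dk^(i). *)
Definition der (e : nat -> P) (p : P) : P :=
  \sum_(m <- msupp p) p@_m *:
     \sum_(i <- finsupp (cmonom_val m))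
        ((cmonom_val m i)%:R * << divcm m (ucm i) >> * e i).

(* total arc-length derivative  D_s = ' : k^(i) |-> k^(i+1) *)
Definition Ds : P -> P := der (fun i => kv i.+1).

Definition pder (i : nat) : P -> P := der (fun j => (j == i)%:R).

Definition evder (a : P) : P -> P := der (fun m => iter m Ds a).

(* an upper bound for the order (1 + highest derivative occurring) *)
Definition ordb (p : P) : nat :=
  (\max_(m <- msupp p) \max_(i <- finsupp (cmonom_val m)) i.+1)%N.

Definition vard (L : P) : P :=
  \sum_(i < ordb L) iter i (fun h => - Ds h) (pder i L).

(* "int L ds = 0" in Omega^0 (functionals modulo total derivatives) *)
Definition totder (L : P) : Prop := exists h : P, L = Ds h.

(* vector fields V = f T + g N are pairs (f, g) *)
Definition Vf := (P * P)%type.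

(* membership in X_A(Lambda_0):  f = D_s^{-1}(k g) *)
Definition inXA (V : Vf) : Prop := Ds V.1 = kv 0 * V.2.

Definition phiV (V : Vf) : P := Ds V.2 + kv 0 * V.1.
Definition rhoV (V : Vf) : P := Ds V.1 - kv 0 * V.2.

(* V(k^(m)), from V(k) = phi' - k rho and V(h') = V(h)' + rho h' *)
Fixpoint Vk (V : Vf) (m : nat) : P :=
  match m with
  | 0 => Ds (phiV V) - kv 0 * rhoV V
  | m'.+1 => Ds (Vk V m') + rhoV V * kv m'.+1
  end.

Definition act (V : Vf) : P -> P := der (Vk V).

Definition covd (V W : Vf) : Vf :=
  (act V W.1 - W.2 * phiV V, act V W.2 + W.1 * phiV V).

Definition brk (V W : Vf) : Vf :=
  ((covd V W).1 - (covd W V).1, (covd V W).2 - (covd W V).2).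

(* Omega^1: alpha_p, together with a chosen antiderivative p1 of k p' *)
Definition inOmega1 (p p1 : P) : Prop := Ds p1 = kv 0 * Ds p.

(* representative of alpha_p(V) = int V(k) p ds *)
Definition alpha (p : P) (V : Vf) : P := act V (kv 0) * p.

(* (V S) for S = int L ds : representative of int V(k) dL/dk ds *)
Definition actF (V : Vf) (L : P) : P := act V (kv 0) * vard L.

(* pibar(alpha_p) = D_s^{-1}(k p') T + p' N, with D_s^{-1}(k p') = p1 *)
Definition pibar (p p1 : P) : Vf := (p1, Ds p).

Definition mKdVop (p p1 : P) : P :=
  Ds (Ds (Ds p)) + Ds (kv 0) * p1 + kv 0 ^+ 2 * Ds p.

(* the cyclic summand  xi1 omega(xi2,xi3) - omega([xi1,xi2],xi3),
   where xi_j = pibar(alpha_{p_j}) and omega(xi, pibar beta) = beta(xi) *)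
Definition dterm (x1 x2 : Vf) (p3 : P) : P :=
  actF x1 (alpha p3 x2) - alpha p3 (brk x1 x2).

End DiffAlg.

From HB Require Import structures.
From mathcomp Require Import all_boot all_order all_algebra.
From mathcomp Require Import finmap.
From mathcomp.multinomials Require Import monalg.
From mathcomp Require Import ring.
Import GRing.Theory.
Local Open Scope ring_scope.
Set Implicit Arguments.
Unset Strict Implicit.

(* The condition p1' = k p' says exactly that rho vanishes on pibar(alpha_p) = (p1, p'),
   so this vector field acts on P by V(k^(m+1)) = V(k^(m))', i.e. as the evolutionary
   derivation partial_a with a = V(k) = p''' + k' p1 + k^2 p' = cal_D(p).  The three
   Hamiltonian properties then become identities in any commutative differential ring
   (A, D) with an element k and derivations ev_a commuting with D and sending k to a:
   skew-symmetry is cal_D(p) q + cal_D(q) p = D(skew_pot); the bracket of pibar(alpha_p)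
   and pibar(alpha_q) is pibar(alpha_r) for r = ev_{cal_D(p)} q - ev_{cal_D(q)} p
   + q1 p' - p1 q'; and once integration by parts (ev_a L = a dL/dk modulo total
   derivatives) and skew-symmetry are used, the cyclic sum defining d omega is the
   total derivative of an explicit potential. *)

(** * Differential rings *)

Section Derivation.
Variables (A : pzRingType) (d : A -> A).
Hypothesis dD : {morph d : x y / x + y}.
Hypothesis dM : forall x y, d (x * y) = d x * y + x * d y.

Lemma derivation0 : d 0 = 0.
Proof. by apply: (addrI (d 0)); rewrite -dD !addr0. Qed.

Lemma derivation1 : d 1 = 0.
Proof.
have := dM 1 1; rewrite !mul1r mulr1 => /(congr1 (fun x => x - d 1)).
by rewrite addrK subrr => ->.
Qed.

End Derivation.

Section Leibniz.
Variables (R : pzRingType) (A : comAlgType R) (d : A -> A).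
Hypothesis dD : {morph d : x y / x + y}.
Hypothesis dZ : forall c : R, {morph d : x / c *: x}.

Definition leibniz a b := d (a * b) = d a * b + a * d b.

Lemma leibnizC a b : leibniz a b -> leibniz b a.
Proof. by rewrite /leibniz mulrC => ->; ring. Qed.

Lemma leibnizDl a b c : leibniz a c -> leibniz b c -> leibniz (a + b) c.
Proof. by rewrite /leibniz mulrDl !dD => -> ->; ring. Qed.

Lemma leibnizZl (k : R) a b : leibniz a b -> leibniz (k *: a) b.
Proof. by rewrite /leibniz -scalerAl !dZ => ->; rewrite scalerDr -!scalerAl. Qed.

Lemma leibniz1l b : d 1 = 0 -> leibniz 1 b.
Proof. by rewrite /leibniz => ->; rewrite mul0r add0r !mul1r. Qed.

Lemma leibnizMl a b c :
  leibniz a (b * c) -> leibniz b c -> leibniz a b -> leibniz (a * b) c.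
Proof. by rewrite /leibniz -mulrA => -> -> ->; ring. Qed.

End Leibniz.

Lemma sum_kronecker (A : comPzSemiRingType) (s : seq nat) (c e : nat -> A) N :
  (forall j, j \in s -> (j < N)%N) ->
  \sum_(j <- s) c j * e j = \sum_(i < N) e i * \sum_(j <- s) c j * (j == i)%:R.
Proof.
move=> sN; under [RHS]eq_bigr => i _ do rewrite mulr_sumr.
rewrite exchange_big /=; apply: eq_big_seq => j /sN jN.
rewrite (bigD1 (Ordinal jN)) //= eqxx mulr1 big1 ?addr0; first by rewrite mulrC.
by move=> i /negbTE; rewrite -val_eqE /= eq_sym => ->; rewrite !mulr0.
Qed.

Lemma sum_scale_exch (R : pzRingType) (A : algType R) (T : Type) (s : seq T) (a : T -> R) (e : nat -> A)
    (F : nat -> T -> A) N :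
  \sum_(m <- s) a m *: \sum_(i < N) e i * F i m
  = \sum_(i < N) e i * \sum_(m <- s) a m *: F i m.
Proof.
under [RHS]eq_bigr => i _ do rewrite mulr_sumr.
rewrite exchange_big /=; apply: eq_bigr => m _.
by rewrite scaler_sumr; apply: eq_bigr => i _; rewrite scalerAr.
Qed.

Lemma antiderivative_lin (R : pzRingType) (A : comAlgType R) (D : A -> A) (k : A) :
  {morph D : x y / x + y} -> (forall c : R, {morph D : x / c *: x}) ->
  forall p p1 q q1 (c : R), D p1 = k * D p -> D q1 = k * D q ->
  D (p1 + c *: q1) = k * D (p + c *: q).
Proof. by move=> DD DZ p p1 q q1 c Hp Hq; rewrite !DD !DZ Hp Hq mulrDr scalerAr. Qed.

Section Commutation.
Variables (R : pzRingType) (A : comAlgType R) (D d : A -> A).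
Hypotheses (DD : {morph D : x y / x + y}) (dD : {morph d : x y / x + y}).
Hypotheses (DZ : forall c : R, {morph D : x / c *: x}) (dZ : forall c : R, {morph d : x / c *: x}).
Hypothesis DM : forall x y, D (x * y) = D x * y + x * D y.
Hypothesis dM : forall x y, d (x * y) = d x * y + x * d y.

Definition commute_at x := d (D x) = D (d x).

Lemma commute_atD x y : commute_at x -> commute_at y -> commute_at (x + y).
Proof. by rewrite /commute_at !DD !dD => -> ->. Qed.

Lemma commute_atZ (c : R) x : commute_at x -> commute_at (c *: x).
Proof. by rewrite /commute_at DZ dZ => ->; rewrite dZ DZ. Qed.

Lemma commute_at1 : commute_at 1.
Proof. by rewrite /commute_at (derivation1 DM) (derivation1 dM) (derivation0 DD) (derivation0 dD). Qed.

Lemma commute_atM x y : commute_at x -> commute_at y -> commute_at (x * y).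
Proof. by rewrite /commute_at DM dD !dM DD !DM => -> ->; ring. Qed.

End Commutation.

Section DifferentialRing.
Variables (A : comPzRingType) (D : A -> A).
Hypothesis DD : {morph D : x y / x + y}.
Hypothesis DN : {morph D : x / - x}.
Hypothesis DM : forall x y, D (x * y) = D x * y + x * D y.

(* [total D x]: the functional [int x ds] is zero in Omega^0. *)
Definition total x := exists h, x = D h.

Lemma total0 : total 0.
Proof. by exists 0; rewrite (derivation0 DD). Qed.

Lemma totalD x y : total x -> total y -> total (x + y).
Proof. by move=> [h ->] [h' ->]; exists (h + h'); rewrite DD. Qed.

Lemma totalN x : total x -> total (- x).
Proof. by move=> [h ->]; exists (- h); rewrite DN. Qed.

Lemma totalB x y : total x -> total y -> total (x - y).
Proof. by move=> tx ty; apply: totalD => //; apply: totalN. Qed.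

Lemma total_sum (I : Type) (r : seq I) (F : I -> A) :
  (forall i, total (F i)) -> total (\sum_(i <- r) F i).
Proof. by move=> tF; elim/big_ind: _ => //; [exact: total0 | exact: totalD]. Qed.

Lemma total_combine u x y w : total (u - x) -> total (y + w) -> total (x - y - (u + w)).
Proof.
move=> t1 t2; have -> : x - y - (u + w) = - (u - x) - (y + w) by ring.
by apply: totalB => //; apply: totalN.
Qed.

Lemma total_sum3 x1 x2 x3 y1 y2 y3 :
  total (x1 - y1) -> total (x2 - y2) -> total (x3 - y3) -> total (y1 + y2 + y3) ->
  total (x1 + x2 + x3).
Proof.
move=> t1 t2 t3 t; have -> : x1 + x2 + x3 = x1 - y1 + (x2 - y2) + (x3 - y3) + (y1 + y2 + y3).
  by ring.
by apply: totalD => //; apply: totalD => //; apply: totalD.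
Qed.

Lemma total_parts i a b : total (iter i D a * b - a * iter i (fun x => - D x) b).
Proof.
elim: i b => [|i IH] b; first by rewrite subrr; exact: total0.
have [h Hh] := IH (- D b); exists (iter i D a * b + h).
by rewrite [iter i.+1 D a]iterS iterSr DD DM -Hh; ring.
Qed.

Lemma total_parts_sum N a (F : nat -> A) :
  total (\sum_(i < N) iter i D a * F i - a * \sum_(i < N) iter i (fun x => - D x) (F i)).
Proof. by rewrite mulr_sumr -sumrB; apply: total_sum => i; exact: total_parts. Qed.

Variable k : A.

Definition mKdV p p1 := D (D (D p)) + D k * p1 + k ^+ 2 * D p.

Lemma mKdV_flow p p1 : D p1 = k * D p ->
  D (D (D p) + k * p1) - k * (D p1 - k * D p) = mKdV p p1.
Proof. by move=> Hp; rewrite /mKdV DD DM Hp; ring. Qed.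

Definition skew_pot p p1 q q1 :=
  D (D p) * q - D p * D q + p * D (D q) + k * p1 * q + k * q1 * p - p1 * q1.

Lemma mKdV_skew p p1 q q1 : D p1 = k * D p -> D q1 = k * D q ->
  mKdV p p1 * q + mKdV q q1 * p = D (skew_pot p p1 q q1).
Proof. by move=> Hp Hq; rewrite /mKdV /skew_pot !(DD, DN, DM) Hp Hq; ring. Qed.

Section Evolutionary.
(* [ev a] plays the evolutionary derivation [partial_a]. *)
Variable ev : A -> A -> A.
Hypothesis evD : forall a, {morph ev a : x y / x + y}.
Hypothesis evM : forall a x y, ev a (x * y) = ev a x * y + x * ev a y.
Hypothesis ev_comm : forall a x, ev a (D x) = D (ev a x).
Hypothesis evk : forall a, ev a k = a.

Lemma ev_antiderivative p p1 q q1 : D q1 = k * D q ->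
  D (ev (mKdV p p1) q1) = mKdV p p1 * D q + k * D (ev (mKdV p p1) q).
Proof. by move=> Hq; rewrite -ev_comm Hq evM evk ev_comm. Qed.

(* [pibar(alpha_p), pibar(alpha_q)] = pibar(alpha_r) for r = bracket_gen p p1 q q1. *)
Definition bracket_gen p p1 q q1 :=
  ev (mKdV p p1) q - ev (mKdV q q1) p + q1 * D p - p1 * D q.

Lemma bracket_genN p p1 q q1 : D p1 = k * D p -> D q1 = k * D q ->
  ev (mKdV p p1) (D q) + q1 * (D (D p) + k * p1)
    - (ev (mKdV q q1) (D p) + p1 * (D (D q) + k * q1))
  = D (bracket_gen p p1 q q1).
Proof. by move=> Hp Hq; rewrite !ev_comm !(DD, DN, DM) Hp Hq; ring. Qed.

Lemma bracket_genT p p1 q q1 : D p1 = k * D p -> D q1 = k * D q ->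
  D ((ev (mKdV p p1) q1 - D q * (D (D p) + k * p1))
     - (ev (mKdV q q1) p1 - D p * (D (D q) + k * q1)))
  = k * D (bracket_gen p p1 q q1).
Proof.
move=> Hp Hq.
rewrite !(DD, DN) (ev_antiderivative _ _ Hq) (ev_antiderivative _ _ Hp) /mKdV !(DD, DN, DM) Hp Hq.
ring.
Qed.

Definition cyclic_term p1 q1 p2 q2 p3 q3 :=
  ev (mKdV p1 q1) (mKdV p2 q2 * p3) + mKdV p3 q3 * bracket_gen p1 q1 p2 q2.

Definition cyclic_pot p1 q1 p2 q2 p3 q3 :=
  skew_pot (ev (mKdV p1 q1) p2) (ev (mKdV p1 q1) q2) p3 q3
  + mKdV p1 q1 * q2 * p3
  + 2%:R * (k * q1 * (D p2 * q3 - q2 * D p3)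
            + q3 * (D (D p1) * D p2 - D p1 * D (D p2))).

Lemma cyclic_sum_exact p1 q1 p2 q2 p3 q3 :
  D q1 = k * D p1 -> D q2 = k * D p2 -> D q3 = k * D p3 ->
  cyclic_term p1 q1 p2 q2 p3 q3 + cyclic_term p2 q2 p3 q3 p1 q1
    + cyclic_term p3 q3 p1 q1 p2 q2
  = D (cyclic_pot p1 q1 p2 q2 p3 q3 + cyclic_pot p2 q2 p3 q3 p1 q1
       + cyclic_pot p3 q3 p1 q1 p2 q2).
Proof.
move=> H1 H2 H3.
have E12 := ev_antiderivative p1 q1 H2; have E23 := ev_antiderivative p2 q2 H3.
have E31 := ev_antiderivative p3 q3 H1.
rewrite /cyclic_term /cyclic_pot /bracket_gen /skew_pot /mKdV !expr2 in E12 E23 E31 *.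
rewrite !(evD, evM, ev_comm, evk) !(DD, DN, DM) E12 E23 E31 ?(DD, DN, DM) ?H1 ?H2 ?H3 (derivation1 DM).
ring.
Qed.

End Evolutionary.
End DifferentialRing.

(** * Differential polynomials *)

(* Locked: otherwise matching and unification unfold monomials to their finitely
   supported coefficient functions, and comparing two distinct polynomials diverges. *)
HB.lock Definition mon {R : realFieldType} (m : cmonom nat) : P R := << m >>.

Section Derivations.
Variable R : realFieldType.
Implicit Types (e : nat -> P R) (a p x y L : P R) (m : cmonom nat).

Lemma monZ (c : R) m : << c *g m >> = c *: mon m.
Proof.
by rewrite mon.unlock -mul_malgC malgM_def fgmulUU mulr1 mul1m.
Qed.

Lemma kvE i : kv R i = mon (ucm i).
Proof. by rewrite mon.unlock. Qed.

Lemma mon1 : mon mone = 1 :> P R.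
Proof. by rewrite mon.unlock. Qed.

Lemma mon_mul m1 m2 : mon (mmul m1 m2) = mon m1 * mon m2 :> P R.
Proof. by rewrite mon.unlock malgM_def fgmulUU mulr1. Qed.

Lemma der_monomEw e m (dom : {fset nat}) : (finsupp m `<=` dom)%fset ->
  der e (mon m) = \sum_(i <- dom) ((m i)%:R * mon (divcm m (ucm i)) * e i).
Proof.
move=> sub; rewrite mon.unlock /der msuppU1 big_seq_fset1 mcoeffUU scale1r.
rewrite (big_fset_incl _ sub) // => i _; rewrite -cmE_eq0 => /eqP ->.
by rewrite !mul0r.
Qed.

Lemma derEw e p (dom : {fset cmonom nat}) : (msupp p `<=` dom)%fset ->
  der e p = \sum_(m <- dom) p@_m *: der e (mon m).
Proof.
move=> sub; rewrite [LHS]/der (big_fset_incl _ sub) => [|m _]; last first.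
  by rewrite -mcoeff_eq0 => /eqP ->; rewrite scale0r.
apply: eq_bigr => m _; rewrite (der_monomEw _ (fsubset_refl _)).
by rewrite mon.unlock.
Qed.

Lemma derD e : {morph der e : x y / x + y}.
Proof.
move=> x y; pose dom := (msupp x `|` msupp y `|` msupp (x + y))%fset.
have dx : (msupp x `<=` dom)%fset by rewrite /dom -fsetUA fsubsetUl.
have dy : (msupp y `<=` dom)%fset by rewrite /dom fsubsetU // fsubsetUr.
have dxy : (msupp (x + y) `<=` dom)%fset by rewrite /dom fsubsetUr.
rewrite (derEw _ dx) (derEw _ dy) (derEw _ dxy) -big_split.
by apply: eq_bigr => m _; rewrite mcoeffD scalerDl.
Qed.

Lemma derZ e (c : R) : {morph der e : x / c *: x}.
Proof.
move=> x; rewrite (derEw _ (msuppZ_le c x)) (derEw _ (fsubset_refl _)).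
by rewrite scaler_sumr; apply: eq_bigr => m _; rewrite mcoeffZ scalerA.
Qed.

Lemma derN e : {morph der e : x / - x}.
Proof. by move=> x; rewrite -scaleN1r derZ scaleN1r. Qed.

Lemma der1 e : der e 1 = 0.
Proof. by rewrite -mon1 (der_monomEw _ (fsubset_refl _)) mdom1 big_nil. Qed.

Lemma der_kv e i : der e (kv R i) = e i.
Proof.
rewrite kvE (der_monomEw _ (fsubset_refl _)) mdomU big_seq_fset1 cmUU.
have -> : divcm (ucm i) (ucm i) = mone by apply/eqP/cmP => j; rewrite divcmE subnn cm1.
by rewrite mon1 !mul1r.
Qed.

Lemma divcm_mulUl i m : divcm (mmul (ucm i) m) (ucm i) = m.
Proof. by apply/eqP/cmP => j; rewrite divcmE cmM cmU addKn. Qed.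

Lemma divcm_mulU i j m : (0 < m j)%N ->
  divcm (mmul (ucm i) m) (ucm j) = mmul (ucm i) (divcm m (ucm j)).
Proof.
move=> mj; apply/eqP/cmP => l; rewrite divcmE !cmM divcmE !cmU.
by case: (eqVneq j l) => [<-|_]; rewrite ?subn0 ?addnBA.
Qed.

Lemma mon_divcm_mulU i m j :
  (m j)%:R * mon (divcm (mmul (ucm i) m) (ucm j))
  = mon (ucm i) * ((m j)%:R * mon (divcm m (ucm j))) :> P R.
Proof.
case: (posnP (m j)) => [->|mj]; first by rewrite mul0r mul0r mulr0.
by rewrite (divcm_mulU i mj) (mon_mul (ucm i) (divcm m (ucm j))) mulrCA.
Qed.

Lemma der_mulU_term e i m j :
  (mmul (ucm i) m j)%:R * mon (divcm (mmul (ucm i) m) (ucm j)) * e j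
  = (i == j)%:R * mon (divcm (mmul (ucm i) m) (ucm j)) * e j
    + mon (ucm i) * ((m j)%:R * mon (divcm m (ucm j)) * e j).
Proof.
rewrite cmM cmU natrD mulrDl mulrDl (mon_divcm_mulU i m j).
by apply: (congr1 (+%R _)); apply/esym/mulrA.
Qed.

Lemma der_mulU e i m : leibniz (der e) (mon (ucm i)) (mon m).
Proof.
have dU : der e (mon (ucm i)) = e i by rewrite -kvE der_kv.
rewrite /leibniz dU.
have dom : (finsupp (mmul (ucm i) m) `<=` [fset i] `|` finsupp m)%fset.
  by rewrite mdomD mdomU.
have diag : e i * mon m = \sum_(j <- ([fset i] `|` finsupp m)%fset)
    (i == j)%:R * mon (divcm (mmul (ucm i) m) (ucm j)) * e j.
  rewrite (big_fsetD1 i) ?fsetU11 //= eqxx divcm_mulUl big1_fset => [|j].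
    by rewrite addr0 mul1r mulrC.
  rewrite in_fsetD1 eq_sym => /andP[/negbTE -> _] _.
  by rewrite (mul0r (mon _)) mul0r.
rewrite -mon_mul (der_monomEw _ dom) (der_monomEw e (fsubsetUr [fset i]%fset _)).
rewrite diag mulr_sumr -big_split.
by apply: eq_bigr => j _; exact: der_mulU_term.
Qed.

Lemma mon_span_ind (Q : P R -> Prop) :
  (forall x y, Q x -> Q y -> Q (x + y)) -> (forall (c : R) x, Q x -> Q (c *: x)) ->
  (forall m, Q (mon m)) -> forall p, Q p.
Proof.
move=> QD QZ Qm p; rewrite (monalgE p).
have Q0 : Q 0 by have := QZ 0 _ (Qm mone); rewrite scale0r.
by elim/big_ind: _ => // m _; rewrite monZ; apply: QZ.
Qed.

Lemma kv_ind (Q : P R -> Prop) :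
  (forall x y, Q x -> Q y -> Q (x + y)) -> (forall (c : R) x, Q x -> Q (c *: x)) ->
  Q 1 -> (forall i x, Q x -> Q (kv R i * x)) -> forall p, Q p.
Proof.
move=> QD QZ Q1 QM; apply: mon_span_ind => // m.
elim: {m}(mdeg m).+1 {-2}m (ltnSn (mdeg m)) => [|n IH] m; first by rewrite ltn0.
move=> deg_lt; have [/eqP|deg_gt0] := posnP (mdeg m).
  by rewrite mdeg_eq0 => /eqP ->; rewrite mon1.
have /fset0Pn[i supp_i] : finsupp m != fset0.
  by apply: contraTneq deg_gt0 => supp0; rewrite mdegE supp0 big_nil.
have Em : m = mmul (ucm i) (divcm m (ucm i)).
  apply/eqP/cmP => j; rewrite cmM divcmE cmU.
  case: eqVneq => [<-|_]; last by rewrite add0n subn0.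
  by rewrite subnKC // lt0n cmE_neq0.
rewrite Em mon_mul -kvE; apply/QM/IH.
by move: deg_lt; rewrite {1}Em mdegM mdegU.
Qed.

Lemma der_kvM e i y : leibniz (der e) (kv R i) y.
Proof.
apply: leibnizC; elim/mon_span_ind: y => [y z|c y|m].
- by move=> hy hz; exact: (leibnizDl (derD e) hy hz).
- by move=> hy; exact: (leibnizZl (derZ e) c hy).
- by apply: leibnizC; rewrite kvE; exact: der_mulU.
Qed.

Lemma derM e x y : der e (x * y) = der e x * y + x * der e y.
Proof.
elim/kv_ind: x y => [x1 x2 IH1 IH2|c x IH||i x IH] y.
- exact: (leibnizDl (derD e) (IH1 y) (IH2 y)).
- exact: (leibnizZl (derZ e) c (IH y)).
- exact: (leibniz1l _ (der1 e)).
- exact: (leibnizMl (der_kvM e i (x * y)) (IH y) (der_kvM e i x)).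
Qed.

Lemma der_ext e e' : e =1 e' -> der e =1 der e'.
Proof.
move=> ee' p; apply: eq_bigr => m _; apply: congr1.
by apply: eq_bigr => i _; rewrite ee'.
Qed.

Lemma der_Ds e : (forall i, e i.+1 = Ds (e i)) -> forall x, der e (Ds x) = Ds (der e x).
Proof.
move=> eS; elim/kv_ind => [x y|c x||i x IH].
- exact: (commute_atD (derD _) (derD e)).
- exact: (commute_atZ (derZ _) (derZ e)).
- exact: (commute_at1 (derD _) (derD e) (derM _) (derM e)).
- apply: (commute_atM (derD _) (derD e) (derM _) (derM e) _ IH).
  have Ds_kv : Ds (kv R i) = kv R i.+1 := der_kv _ i.
  rewrite /commute_at; exact (etrans (etrans (congr1 (der e) Ds_kv) (der_kv e i.+1))
                 (etrans (eS i) (congr1 (@Ds R) (esym (der_kv e i))))).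
Qed.

Lemma ordb_lt L m j :
  m \in msupp L -> j \in finsupp m -> (j < ordb L)%N.
Proof.
move=> Lm mj; apply: leq_trans (@leq_bigmax_seq _ _ xpredT (fun i => i.+1) j mj isT) _.
exact: (@leq_bigmax_seq _ _ xpredT
  (fun m : cmonom nat => \max_(i <- finsupp (cmonom_val m)) i.+1)%N m Lm isT).
Qed.

Lemma der_monom_chain e m N : (forall j, j \in finsupp m -> (j < N)%N) ->
  der e (mon m) = \sum_(i < N) e i * pder i (mon m).
Proof.
move=> mN; rewrite (der_monomEw e (fsubset_refl _)) (sum_kronecker _ _ mN).
apply: eq_bigr => i _; apply: congr1.
by rewrite /pder (der_monomEw _ (fsubset_refl _)).
Qed.

Lemma der_chain e L : der e L = \sum_(i < ordb L) e i * pder i L.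
Proof.
rewrite (derEw e (fsubset_refl _)).
transitivity (\sum_(m <- msupp L) L@_m *: \sum_(i < ordb L) e i * pder i (mon m)).
  apply: eq_big_seq => m Lm; apply: congr1.
  by apply: der_monom_chain => j; apply: ordb_lt.
rewrite (sum_scale_exch _ _ e (fun i m => pder i (mon m))).
apply: eq_bigr => i _; apply: congr1.
by rewrite /pder (derEw _ (fsubset_refl (msupp L))).
Qed.

Lemma evder_vard a L : totder (evder a L - a * vard L).
Proof.
rewrite /evder der_chain.
exact: (total_parts_sum (derD _) (derM _) (ordb L) a (fun i => pder i L)).
Qed.

End Derivations.

(** * The operator pibar *)

(* Proofs here avoid [rewrite] on goals containing several distinct [act]/[der]
   terms: matching would compare them by conversion, which unfolds [der]. *)
Section HamiltonianOperator.
Variable R : realFieldType.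
Implicit Types (a p q s : P R).

Local Notation k := (kv R 0).
Local Notation brgen := (bracket_gen (@Ds R) k (@evder R)).
Local Notation cterm := (cyclic_term (@Ds R) k (@evder R)).

Lemma evder_k a : evder a k = a.
Proof. exact: der_kv. Qed.

Lemma evderD a : {morph evder a : x y / x + y}.
Proof. exact: derD. Qed.

Lemma evderM a x y : evder a (x * y) = evder a x * y + x * evder a y.
Proof. exact: derM. Qed.

Lemma evder_Ds a x : evder a (Ds x) = Ds (evder a x).
Proof. exact: der_Ds. Qed.

Lemma VkS (V : Vf R) i : Vk V i.+1 = Ds (Vk V i) + rhoV V * kv R i.+1.
Proof. by []. Qed.

Lemma rhoV_pibar p p1 : inOmega1 p p1 -> rhoV (pibar p p1) = 0.
Proof. by move=> Hp; rewrite /rhoV /= Hp subrr. Qed.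

Lemma Vk_pibar p p1 : inOmega1 p p1 ->
  forall i, Vk (pibar p p1) i = iter i (@Ds R) (mKdVop p p1).
Proof.
move=> Hp; elim=> [|i IH].
  change (Ds (Ds (Ds p) + k * p1) - k * (Ds p1 - k * Ds p) = mKdVop p p1).
  exact: (mKdV_flow (D := @Ds R) (derD _) (derM _) Hp).
rewrite VkS (rhoV_pibar Hp) mul0r addr0 IH; exact: (esym (iterS _ _ _)).
Qed.

Lemma act_pibar p p1 : inOmega1 p p1 -> act (pibar p p1) =1 evder (mKdVop p p1).
Proof. by move=> Hp; apply: der_ext => i; exact: Vk_pibar. Qed.

Lemma act_pibar_k p p1 : inOmega1 p p1 -> act (pibar p p1) k = mKdVop p p1.
Proof. by move=> Hp; rewrite (act_pibar Hp) evder_k. Qed.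

Lemma alpha_pibar_skew p p1 q q1 : inOmega1 p p1 -> inOmega1 q q1 ->
  totder (alpha q (pibar p p1) + alpha p (pibar q q1)).
Proof.
move=> Hp Hq.
have ep : alpha q (pibar p p1) = mKdV (@Ds R) k p p1 * q.
  exact: (congr1 (fun x => x * q) (act_pibar_k Hp)).
have eq : alpha p (pibar q q1) = mKdV (@Ds R) k q q1 * p.
  exact: (congr1 (fun x => x * p) (act_pibar_k Hq)).
exists (skew_pot (@Ds R) k p p1 q q1).
exact: (etrans (congr2 +%R ep eq) (mKdV_skew (derD _) (derN _) (derM _) Hp Hq)).
Qed.

Lemma inOmega1_lin p p1 q q1 (c : R) : inOmega1 p p1 -> inOmega1 q q1 ->
  inOmega1 (p + c *: q) (p1 + c *: q1).
Proof. by move=> Hp Hq; exact: (antiderivative_lin (derD _) (derZ _) c Hp Hq). Qed.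

Lemma Ds_lin p q (c : R) : Ds p + c *: Ds q = Ds (p + c *: q).
Proof. exact: (esym (etrans (derD _ p (c *: q)) (congr1 (+%R (Ds p)) (derZ _ c q)))). Qed.

Section Bracket.
Variables (p p1 q q1 : P R).
Hypotheses (Hp : inOmega1 p p1) (Hq : inOmega1 q q1).
Let V := pibar p p1.
Let W := pibar q q1.

Lemma inOmega1_bracket : inOmega1 (brgen p p1 q q1) (brk V W).1.
Proof.
have E : (brk V W).1 = evder (mKdV (@Ds R) k p p1) q1 - Ds q * (Ds (Ds p) + k * p1)
                      - (evder (mKdV (@Ds R) k q q1) p1 - Ds p * (Ds (Ds q) + k * q1)).
  exact: (congr2 (fun a b => a - Ds q * (Ds (Ds p) + k * p1) - (b - Ds p * (Ds (Ds q) + k * q1)))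
            (act_pibar Hp q1) (act_pibar Hq p1)).
exact: (etrans (congr1 (@Ds R) E)
  (bracket_genT (derD _) (derN _) (derM _) evderM evder_Ds evder_k Hp Hq)).
Qed.

Lemma brk_pibar : brk V W = pibar (brgen p p1 q q1) (brk V W).1.
Proof.
have E : (brk V W).2 = evder (mKdV (@Ds R) k p p1) (Ds q) + q1 * (Ds (Ds p) + k * p1)
                      - (evder (mKdV (@Ds R) k q q1) (Ds p) + p1 * (Ds (Ds q) + k * q1)).
  exact: (congr2 (fun a b => a + q1 * (Ds (Ds p) + k * p1) - (b + p1 * (Ds (Ds q) + k * q1)))
            (act_pibar Hp (Ds q)) (act_pibar Hq (Ds p))).
have N := etrans E (bracket_genN (derD _) (derN _) (derM _) evder_Ds Hp Hq).
exact: (etrans (surjective_pairing _) (congr1 (pair _) N)).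
Qed.

End Bracket.

Lemma dterm_pibar p p1 q q1 s s1 :
  inOmega1 p p1 -> inOmega1 q q1 -> inOmega1 s s1 ->
  totder (dterm (pibar p p1) (pibar q q1) s - cterm p p1 q q1 s s1).
Proof.
move=> Hp Hq Hs; set r := brgen p p1 q q1; set r1 := (brk (pibar p p1) (pibar q q1)).1.
have Hr : inOmega1 r r1 := inOmega1_bracket Hp Hq.
have act_brk : act (brk (pibar p p1) (pibar q q1)) k = mKdV (@Ds R) k r r1.
  exact: (etrans (congr1 (fun X => act X k) (brk_pibar Hp Hq)) (act_pibar_k Hr)).
have -> : dterm (pibar p p1) (pibar q q1) s
    = mKdV (@Ds R) k p p1 * vard (mKdV (@Ds R) k q q1 * s) - mKdV (@Ds R) k r r1 * s.
  exact: (f_equal3 (fun a b c => a * vard (b * s) - c * s)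
            (act_pibar_k Hp) (act_pibar_k Hq) act_brk).
apply: (total_combine (derD _) (derN _)); first exact: evder_vard.
by eexists; exact: (mKdV_skew (derD _) (derN _) (derM _) Hr Hs).
Qed.

End HamiltonianOperator.

Theorem theorem5p3 (R : realFieldType) :
  (* pibar maps Omega^1 into X_A and Phi(pibar alpha_p) = pi_1(alpha_p) *)
  (forall p p1 : P R, inOmega1 p p1 ->
     inXA (pibar p p1) /\ forall h : P R, act (pibar p p1) h = evder (mKdVop p p1) h) /\
  (* skew-symmetry:  alpha_q(pibar alpha_p) = - alpha_p(pibar alpha_q) in Omega^0 *)
  (forall p p1 q q1 : P R, inOmega1 p p1 -> inOmega1 q q1 ->
     totder (alpha q (pibar p p1) + alpha p (pibar q q1))) /\
  (* the image pibar Omega^1 is a linear subspace ... *)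
  (forall (p p1 q q1 : P R) (c : R), inOmega1 p p1 -> inOmega1 q q1 ->
     exists r r1 : P R, inOmega1 r r1 /\
       (pibar p p1).1 + c *: (pibar q q1).1 = (pibar r r1).1 /\
       (pibar p p1).2 + c *: (pibar q q1).2 = (pibar r r1).2) /\
  (* ... closed under the Lie bracket *)
  (forall p p1 q q1 : P R, inOmega1 p p1 -> inOmega1 q q1 ->
     exists r r1 : P R, inOmega1 r r1 /\ brk (pibar p p1) (pibar q q1) = pibar r r1) /\
  (* d omega = 0 *)
  (forall p1 p11 p2 p21 p3 p31 : P R,
     inOmega1 p1 p11 -> inOmega1 p2 p21 -> inOmega1 p3 p31 ->
     totder (dterm (pibar p1 p11) (pibar p2 p21) p3
           + dterm (pibar p2 p21) (pibar p3 p31) p1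
           + dterm (pibar p3 p31) (pibar p1 p11) p2)).
Proof.
split; first by move=> p p1 Hp; split; [exact: Hp | exact: act_pibar].
split; first exact: alpha_pibar_skew.
split.
  move=> p p1 q q1 c Hp Hq; exists (p + c *: q), (p1 + c *: q1).
  by split; [exact: inOmega1_lin | split; [exact: erefl | exact: Ds_lin]].
split.
  move=> p p1 q q1 Hp Hq; exists (bracket_gen (@Ds R) (kv R 0) (@evder R) p p1 q q1).
  by exists (brk (pibar p p1) (pibar q q1)).1; split; [exact: inOmega1_bracket | exact: brk_pibar].
move=> p1 p11 p2 p21 p3 p31 H1 H2 H3.
apply: (total_sum3 (derD _) (dterm_pibar H1 H2 H3) (dterm_pibar H2 H3 H1) (dterm_pibar H3 H1 H2)).
eexists; exact: (cyclic_sum_exact (derD _) (derN _) (derM _)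
  (@evderD R) (@evderM R) (@evder_Ds R) (@evder_k R) H1 H2 H3).
Qed.
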